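(* Let $L=(l_1,\dots,l_n)$, $n\ge 4$, be a generic length vector satisfying the strict triangle inequality, and let $l_a\ge l_b\ge l_c$ be its three largest entries (for distinct indices $a,b,c$). (1) If $l_b+l_c<|L|/2$ (i.e. the moduli space of $L$ is connected), then any two vertices of $\Gamma(L)$ are connected by a path in $\Gamma(L)$ of length at most $13$. (2) If $l_b+l_c>|L|/2$ (i.e. the moduli space of $L$ is disconnected), then any two vertices of $\Gamma(L)$ lying in the same connected component of $\Gamma(L)$ are connected by a path in $\Gamma(L)$ of length at most $7$.
   Context: Let $n\ge 4$ and $L=(l_1,\dots,l_n)$ be positive reals with $l_i<\sum_{j\ne i}l_j$ for every $i$ (strict triangle inequality), and generic: there is no $J\subseteq[n]$ with $\sum_{i\in J}l_i=\sum_{i\notin J}l_i$. Here $[n]=\{1,\dots,n\}$ and $|L|=\sum_{i=1}^n l_i$. A set $I\subseteq[n]$ is short if $\sum_{i\in I}l_i<|L|/2$ and long otherwise. A cyclically ordered partition of $[n]$ into $k$ parts is a sequence $(A_1,\dots,A_k)$ of pairwise disjoint nonempty sets with union $[n]$, considered up to cyclic shifts $(A_1,\dots,A_k)\sim(A_2,\dots,A_k,A_1)$; there is no ordering inside a part. It is admissible if every part is short. The graph $\Gamma(L)$ has as vertices the admissible cyclically ordered partitions of $[n]$ into 3 parts, written $(I,J,K)$, and as edges the admissible cyclically ordered partitions into 4 parts $(A,B,C,D)$; such an edge is incident to each of the partitions $(A\cup B,C,D)$, $(A,B\cup C,D)$, $(A,B,C\cup D)$, $(D\cup A,B,C)$ that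 is admissible. Equivalently, two vertices are adjacent iff one is obtained from the other by moving a nonempty proper subset of one part into another part. The length of a path is its number of edges. ($\Gamma(L)$ is the 1-skeleton of a cell decomposition of the moduli space of planar configurations of $L$ modulo orientation-preserving isometries.) *)

From HB Require Import structures.
From mathcomp Require Import all_boot all_order all_algebra.
Set Implicit Arguments. Unset Strict Implicit. Unset Printing Implicit Defensive.
Import Order.TTheory GRing.Theory Num.Theory.
Local Open Scope ring_scope.

Section Polygon.
Variables (R : realFieldType) (n : nat) (L : 'I_n -> R).

Definition totlen : R := \sum_(i < n) L i.

Definition setlen (A : {set 'I_n}) : R := \sum_(i in A) L i.

Definition short (A : {set 'I_n}) : bool := setlen A < totlen / 2%:R.

Definition ordpart (s : seq {set 'I_n}) : bool :=
  [&& all (fun A => A != set0) s,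
      pairwise (fun A B : {set 'I_n} => A :&: B == set0) s &
      \bigcup_(A <- s) A == setT].

Definition admissible (s : seq {set 'I_n}) : bool :=
  ordpart s && all short s.

Definition cyc_eq (s t : seq {set 'I_n}) : Prop := exists k : nat, t = rot k s.

(* representatives of vertices of Gamma(L): admissible 3-part sequences *)
Definition is_vertex (s : seq {set 'I_n}) : bool := (size s == 3%N) && admissible s.

(* representatives of edges of Gamma(L): admissible 4-part sequences *)
Definition is_edge (s : seq {set 'I_n}) : bool := (size s == 4%N) && admissible s.

Definition merges (e : seq {set 'I_n}) : seq (seq {set 'I_n}) :=
  match e with
  | [:: A; B; C; D] =>
      [:: [:: A :|: B; C; D]; [:: A; B :|: C; D];
          [:: A; B; C :|: D]; [:: D :|: A; B; C]]
  | _ => [::]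
  end.

Definition incident (e v : seq {set 'I_n}) : Prop :=
  is_edge e /\ exists2 m, m \in merges e & admissible m /\ cyc_eq m v.

Definition adjacent (u v : seq {set 'I_n}) : Prop :=
  exists e, incident e u /\ incident e v.

Definition walk_le (k : nat) (u v : seq {set 'I_n}) : Prop :=
  exists p : seq (seq {set 'I_n}),
    [/\ (size p <= k)%N, last u p = v &
        forall i, (i < size p)%N -> adjacent (nth u (u :: p) i) (nth u p i)].

End Polygon.

From HB Require Import structures.
From mathcomp Require Import all_boot all_order all_algebra.
From mathcomp Require Import lra zify.
Import Order.TTheory GRing.Theory Num.Theory.
Local Open Scope ring_scope.
Set Implicit Arguments. Unset Strict Implicit. Unset Printing Implicit Defensive.

(* Moving a nonempty proper subset S of one part into
   another part, when the result is again admissible, crosses one edge (the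
   4-part partition in which S is split off).  [reach k u v] says that v is
   obtained from u by at most k such moves, up to cyclic rotation.

   Fix a hub index e (e = a if {a,b} is short, e = b else):
   - [reduce_to_hub]: every vertex reaches some ({e}, Q, W) in 2 moves;
   - [normal_pair]: ({e},X,Y) reaches ({e},X',Y') in 2 or ({e},Y',X') in 3 moves;
   - [hub_flip]: some ({e},X,Y) reaches its mirror ({e},Y,X) in 3 moves;
   so any two vertices are 2+2+3+3+2 = 12 moves apart ([hub_diameter]).

   No short set contains two of a, b, c, so the cyclic
   order of a and b in a vertex is invariant along edges ([orient_walk]), and
   every vertex reaches in 2 moves the vertex ({a},{b},rest) or ({a},rest,{b})
   of its orientation ([disc_normal]); hence 4 moves suffice.

   A reach of length k gives a walk of length max(k,1), a loop edge being
   available at every vertex when n >= 4; this yields the bounds 13 and 7. *)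

Definition one_of3 (p q r : bool) :=
  [|| p && ~~ q && ~~ r, ~~ p && q && ~~ r | ~~ p && ~~ q && r].
Definition one_of4 (p q r s : bool) :=
  [|| p && ~~ q && ~~ r && ~~ s, ~~ p && q && ~~ r && ~~ s,
      ~~ p && ~~ q && r && ~~ s | ~~ p && ~~ q && ~~ r && s].

(* Set identities between finitely many sets are decided pointwise by case
   analysis on the memberships (and equalities) occurring in the goal. *)
Ltac case_mem := repeat match goal with
 | |- context [ ?x \in ?A ] => let E := fresh "E" in case E: (x \in A) => //=
 end.

Ltac case_mem_eq := repeat match goal with
 | |- context [ ?x \in ?A ] => let E := fresh "E" in case E: (x \in A) => //=
 | |- context [ ?x == ?y ] => let E := fresh "E" in case E: (x == y) => //=
 end.

Section Polygon.
Variables (R : realFieldType) (n : nat) (L : 'I_n -> R).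
Hypothesis Lpos : forall i, 0 < L i.
Hypothesis tri : forall i, L i < \sum_(j < n | j != i) L j.
Hypothesis gen : forall J : {set 'I_n}, setlen L J != setlen L (~: J).

Local Notation T := (totlen L).
Local Notation sl := (setlen L).
Local Notation sh := (short L).
Local Notation sq := (seq {set 'I_n}).
Implicit Types (X Y Z S A B C D P Q W U : {set 'I_n}) (x y z e : 'I_n).

Definition part3 A B C := forall x, one_of3 (x \in A) (x \in B) (x \in C).
Definition part4 A B C D :=
  forall x, one_of4 (x \in A) (x \in B) (x \in C) (x \in D).

Lemma setlenE X : sl X = \sum_i (if i \in X then L i else 0).
Proof. by rewrite /setlen big_mkcond. Qed.

Lemma shortE X : sh X = (2%:R * sl X < T).
Proof. by rewrite /short; apply/idP/idP => h; lra. Qed.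

Lemma setlenC X : sl (~: X) = T - sl X.
Proof.
apply/eqP; rewrite eq_sym subr_eq /totlen !setlenE -big_split /=; apply/eqP.
by apply: eq_bigr => i _; rewrite inE; case: (i \in X); rewrite ?add0r ?addr0.
Qed.

Lemma setlenU X Y : (forall x, x \in X -> x \in Y -> False) ->
  sl (X :|: Y) = sl X + sl Y.
Proof.
move=> dXY; rewrite !setlenE -big_split /=; apply: eq_bigr => i _.
rewrite inE; move: (dXY i); case: (i \in X); case: (i \in Y) => //= h;
  rewrite ?add0r ?addr0 //; by case: h.
Qed.

Lemma setlen_le X Y : (forall x, x \in X -> x \in Y) -> sl X <= sl Y.
Proof.
move=> sXY; rewrite !setlenE; apply: ler_sum => i _.
move: (sXY i) (Lpos i); case: (i \in X); case: (i \in Y) => //= h.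
  by move: (h isT).
by move=> /ltW.
Qed.

Lemma setlen1 x : sl [set x] = L x.
Proof. by rewrite /setlen big_set1. Qed.

Lemma setlen2 x y : x != y -> sl ([set x] :|: [set y]) = L x + L y.
Proof.
move=> xy; rewrite setlenU ?setlen1 // => z; rewrite !inE => /eqP -> /eqP h.
by move: xy; rewrite h eqxx.
Qed.

Lemma setlenT : sl [set: 'I_n] = T.
Proof. by rewrite /setlen /totlen; apply: eq_bigl => i; rewrite inE. Qed.

Lemma totlen1 x : T = L x + \sum_(j < n | j != x) L j.
Proof. by rewrite /totlen (bigD1 x). Qed.

Lemma totlen_gt0 x : 0 < T.
Proof. by move: (tri x) (Lpos x); rewrite (totlen1 x); lra. Qed.

Lemma part3_len X Y Z : part3 X Y Z -> sl X + sl Y + sl Z = T.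
Proof.
move=> p; rewrite !setlenE /totlen -!big_split; apply: eq_bigr => i _ /=.
move: (p i); rewrite /one_of3.
by case: (i \in X); case: (i \in Y); case: (i \in Z) => //= _; rewrite ?addr0 ?add0r.
Qed.

Lemma generic_half X : 2%:R * sl X != T.
Proof.
by apply/eqP => h; move: (gen X); rewrite setlenC -h; move/eqP; apply; lra.
Qed.

Lemma short_le X : 2%:R * sl X <= T -> sh X.
Proof. by move: (generic_half X); rewrite shortE => /eqP h1 h2; lra. Qed.

Lemma not_short X : ~~ sh X -> T < 2%:R * sl X.
Proof. by move: (generic_half X); rewrite shortE => /eqP h1 h2; lra. Qed.

Lemma shortC X : sh (~: X) = ~~ sh X.
Proof.
case h: (sh X) => /=.
  by apply/negbTE; rewrite shortE setlenC; move: h; rewrite shortE; lra.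
by apply: short_le; rewrite setlenC; move/negbT/not_short: h; lra.
Qed.

Lemma short_sub X Y : (forall x, x \in X -> x \in Y) -> sh Y -> sh X.
Proof. by move=> sXY; rewrite !shortE; move: (setlen_le sXY); lra. Qed.

(* Singletons are short: this is the strict triangle inequality. *)
Lemma short1 x : sh [set x].
Proof. by rewrite shortE setlen1; move: (tri x); rewrite (totlen1 x); lra. Qed.

Lemma pair_long x y X : x != y -> x \in X -> y \in X ->
  T < 2%:R * (L x + L y) -> ~~ sh X.
Proof.
move=> xy hx hy hT; rewrite shortE -leNgt.
have : sl ([set x] :|: [set y]) <= sl X.
  by apply: setlen_le => z; rewrite !inE => /orP[] /eqP ->.
by rewrite setlen2 //; lra.
Qed.

Lemma ordpart3 A B C : ordpart [:: A; B; C] <->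
  [/\ A != set0, B != set0, C != set0 & part3 A B C].
Proof.
rewrite /ordpart /= !big_cons big_nil /= !andbT; split.
  case/and3P => /and3P[-> -> ->] /andP[/andP[dAB dAC] dBC] /eqP U.
  split=> // x; move/setP: U => /(_ x); rewrite !inE /= orbF => U.
  move/eqP/setP: dAB => /(_ x); move/eqP/setP: dAC => /(_ x);
  move/eqP/setP: dBC => /(_ x); rewrite !inE /one_of3; move: U; case_mem.
case=> -> -> -> p /=.
have disj X Y : (forall x, (x \in X) && (x \in Y) = false) -> X :&: Y == set0.
  by move=> h; apply/eqP/setP => x; rewrite !inE h.
rewrite !disj ?andbT.
- by apply/eqP/setP => x; rewrite !inE orbF; move: (p x); rewrite /one_of3; case_mem.
all: by move=> x; move: (p x); rewrite /one_of3; case_mem.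
Qed.

Lemma ordpart4 A B C D : ordpart [:: A; B; C; D] <->
  [/\ A != set0, B != set0, C != set0, D != set0 & part4 A B C D].
Proof.
rewrite /ordpart /= !big_cons big_nil /= !andbT; split.
  case/and3P => /and4P[-> -> -> ->]
    /and3P[/and3P[dAB dAC dAD] /andP[dBC dBD] dCD] /eqP U.
  split=> // x; move/setP: U => /(_ x); rewrite !inE /= orbF => U.
  move/eqP/setP: dAB => /(_ x); move/eqP/setP: dAC => /(_ x);
  move/eqP/setP: dAD => /(_ x); move/eqP/setP: dBC => /(_ x);
  move/eqP/setP: dBD => /(_ x); move/eqP/setP: dCD => /(_ x);
  rewrite !inE /one_of4; move: U; case_mem.
case=> -> -> -> -> p /=.
have disj X Y : (forall x, (x \in X) && (x \in Y) = false) -> X :&: Y == set0.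
  by move=> h; apply/eqP/setP => x; rewrite !inE h.
rewrite !disj ?andbT.
all: try by move=> x; move: (p x); rewrite /one_of4; case_mem.
by apply/eqP/setP => x; rewrite !inE orbF; move: (p x); rewrite /one_of4; case_mem.
Qed.

Definition v3 A B C : sq := [:: A; B; C].
Definition vtx A B C := is_vertex L (v3 A B C).

Lemma vtxP A B C : vtx A B C <->
  [/\ A != set0, B != set0, C != set0, part3 A B C & [&& sh A, sh B & sh C]].
Proof.
rewrite /vtx /is_vertex /admissible /= !andbT; split.
  by case/andP => /ordpart3 [h1 h2 h3 h4] h5.
by case=> h1 h2 h3 h4 h5; rewrite h5 andbT; apply/ordpart3.
Qed.

Lemma edgeP A B C D : is_edge L [:: A; B; C; D] <->
  [/\ A != set0, B != set0, C != set0, D != set0 &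
      part4 A B C D /\ [&& sh A, sh B, sh C & sh D]].
Proof.
rewrite /is_edge /admissible /= !andbT; split.
  by case/andP => /ordpart4 [h1 h2 h3 h4 h5] h6.
by case=> h1 h2 h3 h4 [h5 h6]; rewrite h6 andbT; apply/ordpart4.
Qed.

Lemma vtx_adm A B C : vtx A B C -> admissible L (v3 A B C).
Proof. by case/andP. Qed.

Lemma vtx_rot A B C : vtx A B C -> vtx B C A.
Proof.
case/vtxP => h1 h2 h3 p /and3P[s1 s2 s3]; apply/vtxP.
split=> //; last by rewrite s1 s2 s3.
by move=> x; move: (p x); rewrite /one_of3; case_mem.
Qed.

Lemma vtx_rot2 A B C : vtx A B C -> vtx C A B.
Proof. by move/vtx_rot/vtx_rot. Qed.

Lemma vtx_of u : is_vertex L u -> exists A B C, u = v3 A B C /\ vtx A B C.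
Proof. by case: u => [|A [|B [|C [|D s]]]] // h; exists A, B, C. Qed.

Lemma cyc_refl (s : sq) : cyc_eq s s.
Proof. by exists 0%N; rewrite rot0. Qed.

Lemma cyc_sym (s t : sq) : cyc_eq s t -> cyc_eq t s.
Proof. by case=> k ->; exists (size (rot k s) - k)%N; rewrite -{1}(rotK k s). Qed.

Lemma rot_norm (s : sq) k : exists2 k', (k' <= size s)%N & rot k s = rot k' s.
Proof.
case: (leqP k (size s)) => h; first by exists k.
by exists 0%N => //; rewrite rot0 rot_oversize // ltnW.
Qed.

Lemma cyc_trans (s t w : sq) : cyc_eq s t -> cyc_eq t w -> cyc_eq s w.
Proof.
case=> k ->; case=> j ->.
case: (rot_norm s k) => k' hk ->; case: (rot_norm (rot k' s) j) => j' hj ->.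
by rewrite size_rot in hj; rewrite rot_add_mod //; eexists.
Qed.

Lemma cyc1 A B C : cyc_eq (v3 A B C) (v3 B C A).
Proof. by exists 1%N. Qed.

Lemma cyc2 A B C : cyc_eq (v3 A B C) (v3 C A B).
Proof. by exists 2%N. Qed.

Lemma adj_sym (u v : sq) : adjacent L u v -> adjacent L v u.
Proof. by case=> e [h1 h2]; exists e. Qed.

Lemma inc_cyc (e u u' : sq) : incident L e u -> cyc_eq u u' -> incident L e u'.
Proof.
case=> he [m hm [ha hc]] hu; split=> //; exists m => //; split=> //.
exact: cyc_trans hc hu.
Qed.

Lemma adj_cyc_r (u v v' : sq) : adjacent L u v -> cyc_eq v v' -> adjacent L u v'.
Proof. by case=> e [h1 h2] h; exists e; split=> //; apply: inc_cyc h2 h. Qed.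

Lemma adj_cyc_l (u u' v : sq) : adjacent L u v -> cyc_eq u u' -> adjacent L u' v.
Proof. by move=> h1 h2; apply/adj_sym/(adj_cyc_r _ h2)/adj_sym. Qed.

Inductive reach : nat -> sq -> sq -> Prop :=
| reach0 k u v : cyc_eq u v -> reach k u v
| reachS k u w v : adjacent L u w -> reach k w v -> reach k.+1 u v.

Lemma reach_refl k u : reach k u u.
Proof. exact/reach0/cyc_refl. Qed.

Lemma reach_cyc_r k u v v' : reach k u v -> cyc_eq v v' -> reach k u v'.
Proof.
elim=> {k u v} [k u v h|k u w v h _ IH] hv; first by apply/reach0/(cyc_trans h).
exact: reachS h (IH hv).
Qed.

Lemma reach_cyc_l k u u' v : cyc_eq u u' -> reach k u v -> reach k u' v.
Proof.
move=> hu h; case: h hu => {k u v} [k u v h|k u w v h h2] hu.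
  by apply/reach0/(cyc_trans _ h)/cyc_sym.
exact: reachS (adj_cyc_l h hu) h2.
Qed.

Lemma reach_mono k k' u v : reach k u v -> (k <= k')%N -> reach k' u v.
Proof.
move=> h; elim: h k' => {k u v} [k u v h|k u w v h _ IH] [|k'] hk //.
- exact: reach0.
- exact: reach0.
- exact: reachS h (IH _ hk).
Qed.

Lemma reach_trans k m u w v : reach k u w -> reach m w v -> reach (k + m) u v.
Proof.
elim=> {k u w} [k u w h|k u w' w h _ IH] hm.
  exact: reach_mono (reach_cyc_l (cyc_sym h) hm) (leq_addl k m).
by rewrite addSn; apply: reachS h (IH hm).
Qed.

Lemma reach_sym k u v : reach k u v -> reach k v u.
Proof.
elim=> {k u v} [k u v h|k u w v h _ IH]; first exact/reach0/cyc_sym.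
by rewrite -addn1; apply: reach_trans IH (reachS (adj_sym h) (reach_refl _ _)).
Qed.

Lemma reach_walk k u v : reach k u v -> cyc_eq u v \/ walk_le L k u v.
Proof.
elim=> {k u v} [k u v h|k u w v h _ IH]; first by left.
right; case: IH => [hc|[p [hp hl hn]]].
  by exists [:: v]; split=> //; case=> //= _; apply: adj_cyc_r hc.
exists (w :: p); split=> //; case=> [|i] /= hi //.
rewrite (set_nth_default w u); last by rewrite /= ltnS ltnW.
by rewrite [nth u p i](set_nth_default w u) //; apply: hn.
Qed.

Lemma edge_of A B C S : vtx A B C -> (forall x, x \in S -> x \in A) ->
  S != set0 -> A :\: S != set0 ->
  is_edge L [:: S; A :\: S; B; C] /\ is_edge L [:: A :\: S; S; B; C].
Proof.
case/vtxP => h1 h2 h3 p /and3P[s1 s2 s3] sS n1 n2.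
have sh1 : sh S by apply: short_sub sS s1.
have sh2 : sh (A :\: S) by apply: (short_sub _ s1) => x; rewrite inE => /andP[].
have p4 x : one_of4 (x \in S) (x \in A :\: S) (x \in B) (x \in C)
            && one_of4 (x \in A :\: S) (x \in S) (x \in B) (x \in C).
  by move: (p x) (introT implyP (sS x)); rewrite /one_of3 /one_of4 !inE; case_mem.
split; apply/edgeP; (split; [done|done|done|done|split]);
  rewrite ?sh1 ?sh2 ?s2 ?s3 // => x; by case/andP: (p4 x).
Qed.

Lemma move12 A B C S : vtx A B C -> (forall x, x \in S -> x \in A) ->
  A :\: S != set0 -> sh (B :|: S) ->
  reach 1 (v3 A B C) (v3 (A :\: S) (B :|: S) C) /\ vtx (A :\: S) (B :|: S) C.
Proof.
move=> hv sS n2 shBS.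
have hv' : vtx (A :\: S) (B :|: S) C.
  case/vtxP: hv => h1 h2 h3 p /and3P[s1 s2 s3]; apply/vtxP; split => //.
  - by rewrite setU_eq0 negb_and h2.
  - by move=> x; move: (p x) (introT implyP (sS x)); rewrite /one_of3 !inE; case_mem.
  rewrite shBS s3 !andbT; by apply: (short_sub _ s1) => x; rewrite inE => /andP[].
split=> //.
case: (eqVneq S set0) => [->|n1]; first by rewrite setD0 setU0; apply: reach_refl.
apply: reachS (reach_refl _ _).
case: (edge_of hv sS n1 n2) => _ he.
exists [:: A :\: S; S; B; C]; split; split => //.
  exists [:: A :\: S :|: S; B; C]; first by rewrite /merges inE eqxx.
  have -> : A :\: S :|: S = A.
    by apply/setP => x; move: (introT implyP (sS x)); rewrite !inE; case_mem.
  by split; [exact: vtx_adm | exact: cyc_refl].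
exists [:: A :\: S; S :|: B; C]; first by rewrite /merges !inE eqxx ?orbT.
by rewrite setUC; split; [exact: vtx_adm | exact: cyc_refl].
Qed.

Lemma move13 A B C S : vtx A B C -> (forall x, x \in S -> x \in A) ->
  A :\: S != set0 -> sh (C :|: S) ->
  reach 1 (v3 A B C) (v3 (A :\: S) B (C :|: S)) /\ vtx (A :\: S) B (C :|: S).
Proof.
move=> hv sS n2 shCS.
have hv' : vtx (A :\: S) B (C :|: S).
  case/vtxP: hv => h1 h2 h3 p /and3P[s1 s2 s3]; apply/vtxP; split => //.
  - by rewrite setU_eq0 negb_and h3.
  - by move=> x; move: (p x) (introT implyP (sS x)); rewrite /one_of3 !inE; case_mem.
  rewrite shCS s2 !andbT; by apply: (short_sub _ s1) => x; rewrite inE => /andP[].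
split=> //.
case: (eqVneq S set0) => [->|n1]; first by rewrite setD0 setU0; apply: reach_refl.
apply: reachS (reach_refl _ _).
case: (edge_of hv sS n1 n2) => he _.
exists [:: S; A :\: S; B; C]; split; split => //.
  exists [:: S :|: (A :\: S); B; C]; first by rewrite /merges inE eqxx.
  have -> : S :|: (A :\: S) = A.
    by apply/setP => x; move: (introT implyP (sS x)); rewrite !inE; case_mem.
  by split; [exact: vtx_adm | exact: cyc_refl].
exists [:: C :|: S; A :\: S; B]; first by rewrite /merges !inE eqxx ?orbT.
split; last by exists 1%N.
exact/vtx_adm/vtx_rot/vtx_rot.
Qed.

(* The other moves follow by rotating the vertex. *)
Lemma move21 A B C S : vtx A B C -> (forall x, x \in S -> x \in B) ->
  B :\: S != set0 -> sh (A :|: S) ->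
  reach 1 (v3 A B C) (v3 (A :|: S) (B :\: S) C) /\ vtx (A :|: S) (B :\: S) C.
Proof.
move=> hv sS nS shAS; case: (move13 (vtx_rot hv) sS nS shAS) => h1 h2; split.
  exact: reach_cyc_l (cyc_sym (cyc1 A B C)) (reach_cyc_r h1 (cyc2 _ _ _)).
exact: vtx_rot2.
Qed.

Lemma move23 A B C S : vtx A B C -> (forall x, x \in S -> x \in B) ->
  B :\: S != set0 -> sh (C :|: S) ->
  reach 1 (v3 A B C) (v3 A (B :\: S) (C :|: S)) /\ vtx A (B :\: S) (C :|: S).
Proof.
move=> hv sS nS shCS; case: (move12 (vtx_rot hv) sS nS shCS) => h1 h2; split.
  exact: reach_cyc_l (cyc_sym (cyc1 A B C)) (reach_cyc_r h1 (cyc2 _ _ _)).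
exact: vtx_rot2.
Qed.

Lemma move32 A B C S : vtx A B C -> (forall x, x \in S -> x \in C) ->
  C :\: S != set0 -> sh (B :|: S) ->
  reach 1 (v3 A B C) (v3 A (B :|: S) (C :\: S)) /\ vtx A (B :|: S) (C :\: S).
Proof.
move=> hv sS nS shBS; case: (move13 (vtx_rot2 hv) sS nS shBS) => h1 h2; split.
  exact: reach_cyc_l (cyc1 C A B) (reach_cyc_r h1 (cyc1 _ _ _)).
exact: vtx_rot.
Qed.

Lemma rot_to u x : is_vertex L u ->
  exists P Q W, [/\ cyc_eq u (v3 P Q W), x \in P & vtx P Q W].
Proof.
case/vtx_of => A [B [C [-> hv]]].
case/vtxP: (hv) => _ _ _ p _; move: (p x); rewrite /one_of3.
case hA: (x \in A); first by exists A, B, C; split=> //; apply: cyc_refl.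
case hB: (x \in B); first by exists B, C, A; split=> //; [apply: cyc1 | apply: vtx_rot].
case hC: (x \in C) => // _.
by exists C, A, B; split=> //; [apply: cyc2 | apply: vtx_rot2].
Qed.

(* Let e be a longest element of the part P.  Take a
   maximal X in P \ {e} that can be added to Q; the rest of P \ {e} can then be
   added to W, because Q + X + z is long for each remaining z and L z <= L e. *)
Lemma reduce_rest_short P Q W e X : vtx P Q W -> e \in P ->
  (forall z, z \in P -> L z <= L e) -> X \subset P :\ e ->
  (forall z, z \in (P :\ e) :\: X -> ~~ sh (Q :|: (z |: X))) ->
  sh (W :|: ((P :\ e) :\: X)).
Proof.
move=> hv eP mx /subsetP sXP maxX.
case/vtxP: hv => _ _ _ p /and3P[_ _ sW].
case: (eqVneq ((P :\ e) :\: X) set0) => [->|/set0Pn [z zY]]; first by rewrite setU0.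
have zX : z \notin X by move: zY; rewrite !inE => /andP[].
have zP : z \in P by move: zY; rewrite !inE => /and3P[].
have eX : e \notin X by apply/negP => /sXP; rewrite !inE eqxx.
have hlong := not_short (maxX z zY).
have eQzX : Q :|: (z |: X) = (Q :|: X) :|: [set z].
  by apply/setP => x; rewrite !inE; case_mem_eq.
rewrite eQzX setlenU ?setlen1 in hlong; last first.
  move=> x; rewrite !inE => hx /eqP ex; subst x.
  by move: hx (p z) zY zX; rewrite /one_of3 !inE; case_mem_eq.
have p3 : part3 (W :|: ((P :\ e) :\: X)) (Q :|: X) [set e].
  move=> x; case E: (x == e).
    by move/eqP: E => ->; move: (p e) eP eX; rewrite /one_of3 !inE eqxx; case_mem_eq.
  by move: (p x) (introT implyP (sXP x)); rewrite /one_of3 !inE E; case_mem_eq.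
move: (part3_len p3) (mx z zP); rewrite setlen1 => hs hz.
by apply: short_le; lra.
Qed.

Lemma reduce_to_hub P Q W e : vtx P Q W -> e \in P ->
  (forall z, z \in P -> L z <= L e) ->
  exists Q' W', reach 2 (v3 P Q W) (v3 [set e] Q' W') /\ vtx [set e] Q' W'.
Proof.
move=> hv eP mx; case/vtxP: (hv) => _ _ _ p /and3P[_ sQ _].
pose F X := (X \subset P :\ e) && sh (Q :|: X).
have F0 : F set0 by rewrite /F sub0set setU0 sQ.
case: (arg_maxnP (fun X => #|X|) F0) => X /andP[sXPe shQX] maxX.
have sXP x : x \in X -> x \in P by move/(subsetP sXPe); rewrite !inE => /andP[].
have eX : e \notin X by apply/negP => /(subsetP sXPe); rewrite !inE eqxx.
have nPX : P :\: X != set0 by apply/set0Pn; exists e; rewrite inE eX eP.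
case: (move12 hv sXP nPX shQX) => r1 v1.
have sY x : x \in (P :\ e) :\: X -> x \in P :\: X.
  by rewrite !inE => /and3P[-> _ ->].
have nY : (P :\: X) :\: ((P :\ e) :\: X) != set0.
  by apply/set0Pn; exists e; rewrite !inE eqxx eX eP.
have shWY : sh (W :|: ((P :\ e) :\: X)).
  apply: (reduce_rest_short hv eP mx sXPe) => z zY; apply/negP => shz.
  have zX : z \notin X by move: zY; rewrite !inE => /andP[].
  have Fz : F (z |: X).
    rewrite /F shz andbT; apply/subsetP => x; rewrite !inE.
    case/orP => [/eqP ->|/(subsetP sXPe)]; last by rewrite !inE.
    by move: zY; rewrite !inE => /andP[_].
  by move: (maxX _ Fz); rewrite cardsU1 zX /geq /= ltnn.
case: (move13 v1 sY nY shWY) => r2 v2.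
have eqe : (P :\: X) :\: ((P :\ e) :\: X) = [set e].
  apply/setP => x; move: (introT implyP (sXP x)); rewrite !inE.
  by case E: (x == e); [move/eqP: E => ->; rewrite eX eP | case_mem_eq].
rewrite eqe in r2 v2.
by exists (Q :|: X), (W :|: ((P :\ e) :\: X)); split=> //; apply: reach_trans r1 r2.
Qed.

Section NormalPair.
Variables (e : 'I_n) (X Y X' Y' : {set 'I_n}).
Hypotheses (hv : vtx [set e] X Y) (hv' : vtx [set e] X' Y').

Let p1 : part3 [set e] X Y. Proof. by case/vtxP: hv. Qed.
Let p2 : part3 [set e] X' Y'. Proof. by case/vtxP: hv'. Qed.

(* If Y + (X \ X') is short and X & X' is nonempty: move X \ X' into Y,
   then X' \ X back into the middle part. *)
Lemma pair_via_X : sh (Y :|: (X :\: X')) -> X :&: X' != set0 ->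
  reach 2 (v3 [set e] X Y) (v3 [set e] X' Y').
Proof.
move=> shYQ /set0Pn [p0 p0P].
case/vtxP: hv' => _ _ /set0Pn [y0 y0Y'] _ /and3P[_ sX' _].
have s1 x : x \in X :\: X' -> x \in X by rewrite !inE => /andP[].
have n1 : X :\: (X :\: X') != set0.
  by apply/set0Pn; exists p0; move: p0P; rewrite !inE; case_mem.
case: (move23 hv s1 n1 shYQ) => r1 v1.
have s2 x : x \in X' :\: X -> x \in Y :|: (X :\: X').
  by move: (p1 x) (p2 x); rewrite /one_of3 !inE; case_mem_eq.
have n2 : (Y :|: (X :\: X')) :\: (X' :\: X) != set0.
  apply/set0Pn; exists y0.
  by move: y0Y' (p1 y0) (p2 y0); rewrite /one_of3 !inE; case_mem_eq.
have e1 : (X :\: (X :\: X')) :|: (X' :\: X) = X'.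
  by apply/setP => x; move: (p1 x) (p2 x); rewrite /one_of3 !inE; case_mem_eq.
have e2 : (Y :|: (X :\: X')) :\: (X' :\: X) = Y'.
  by apply/setP => x; move: (p1 x) (p2 x); rewrite /one_of3 !inE; case_mem_eq.
have sh2 : sh ((X :\: (X :\: X')) :|: (X' :\: X)) by rewrite e1.
case: (move32 v1 s2 n2 sh2) => r2 _.
by rewrite e1 e2 in r2; apply: reach_trans r1 r2.
Qed.

(* Otherwise {e} + (X & X') is short: move X & X' to {e}, then Y & Y' to
   the middle part (giving Y'), then X & X' on to the last part (giving X'). *)
Lemma pair_swap : sh ([set e] :|: (X :&: X')) ->
  reach 3 (v3 [set e] X Y) (v3 [set e] Y' X').
Proof.
move=> hP.
case/vtxP: hv => _ _ _ _ /and3P[_ _ sY]; case/vtxP: hv' => _ _ _ _ /and3P[_ sX' sY'].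
have s1 x : x \in X :&: X' -> x \in X by rewrite !inE => /andP[].
have n1 : X :\: (X :&: X') != set0.
  apply/negP => /eqP h0; move: hP.
  have -> : [set e] :|: (X :&: X') = ~: Y.
    apply/setP => x; move/setP: h0 => /(_ x).
    by move: (p1 x) (p2 x); rewrite /one_of3 !inE; case_mem_eq.
  by rewrite shortC sY.
case: (move21 hv s1 n1 hP) => r1 v1.
have s2 x : x \in Y :&: Y' -> x \in Y by rewrite !inE => /andP[].
have n2 : Y :\: (Y :&: Y') != set0.
  apply/negP => /eqP h0; move: hP.
  have -> : [set e] :|: (X :&: X') = ~: Y'.
    apply/setP => x; move/setP: h0 => /(_ x).
    by move: (p1 x) (p2 x); rewrite /one_of3 !inE; case_mem_eq.
  by rewrite shortC sY'.
have e2 : (X :\: (X :&: X')) :|: (Y :&: Y') = Y'.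
  by apply/setP => x; move: (p1 x) (p2 x); rewrite /one_of3 !inE; case_mem_eq.
have sh2 : sh ((X :\: (X :&: X')) :|: (Y :&: Y')) by rewrite e2.
case: (move32 v1 s2 n2 sh2) => r2 v2.
have s3 x : x \in X :&: X' -> x \in [set e] :|: (X :&: X').
  by move=> hx; rewrite inE hx orbT.
have n3 : ([set e] :|: (X :&: X')) :\: (X :&: X') != set0.
  by apply/set0Pn; exists e; move: (p1 e); rewrite /one_of3 !inE eqxx; case_mem_eq.
have e3 : (Y :\: (Y :&: Y')) :|: (X :&: X') = X'.
  by apply/setP => x; move: (p1 x) (p2 x); rewrite /one_of3 !inE; case_mem_eq.
have sh3 : sh ((Y :\: (Y :&: Y')) :|: (X :&: X')) by rewrite e3.
case: (move13 v2 s3 n3 sh3) => r3 _.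
have e4 : ([set e] :|: (X :&: X')) :\: (X :&: X') = [set e].
  by apply/setP => x; move: (p1 x) (p2 x); rewrite /one_of3 !inE; case_mem_eq.
by move: (reach_trans (reach_trans r1 r2) r3); rewrite e4 e2 e3.
Qed.

Lemma normal_pair :
  reach 2 (v3 [set e] X Y) (v3 [set e] X' Y') \/
  reach 3 (v3 [set e] X Y) (v3 [set e] Y' X').
Proof.
case A1: (sh (Y :|: (X :\: X')) && (X :&: X' != set0)).
  by case/andP: A1 => h1 h2; left; apply: pair_via_X.
right; apply: pair_swap.
case: (eqVneq (X :&: X') set0) => [->|nP]; first by rewrite setU0 short1.
move: A1; rewrite nP andbT => /negbT.
have -> : Y :|: (X :\: X') = ~: ([set e] :|: (X :&: X')).
  by apply/setP => x; move: (p1 x) (p2 x); rewrite /one_of3 !inE; case_mem_eq.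
by rewrite shortC negbK.
Qed.

End NormalPair.

Lemma flip e X Y S1 : vtx [set e] X Y -> (forall x, x \in S1 -> x \in X) ->
  S1 != set0 -> X :\: S1 != set0 -> sh ([set e] :|: S1) ->
  sh ([set e] :|: (X :\: S1)) ->
  reach 3 (v3 [set e] X Y) (v3 [set e] Y X).
Proof.
move=> hv sS /set0Pn [s0 s0S] n2 h1 h2.
case/vtxP: (hv) => _ _ _ p1 _.
case: (move21 hv sS n2 h1) => r1 v1.
have s2 x : x \in [set e] -> x \in [set e] :|: S1 by move=> hx; rewrite inE hx.
have n3 : ([set e] :|: S1) :\: [set e] != set0.
  apply/set0Pn; exists s0; move: s0S (introT implyP (sS s0)) (p1 s0).
  by rewrite /one_of3 !inE; case_mem_eq.
have h2' : sh ((X :\: S1) :|: [set e]) by rewrite setUC.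
case: (move12 v1 s2 n3 h2') => r2 v2.
have s3 x : x \in X :\: S1 -> x \in (X :\: S1) :|: [set e].
  by move=> hx; rewrite inE hx.
have n4 : ((X :\: S1) :|: [set e]) :\: (X :\: S1) != set0.
  by apply/set0Pn; exists e; move: (p1 e); rewrite /one_of3 !inE eqxx; case_mem_eq.
have e1 : (([set e] :|: S1) :\: [set e]) :|: (X :\: S1) = X.
  apply/setP => x; move: (introT implyP (sS x)) (p1 x).
  by rewrite /one_of3 !inE; case_mem_eq.
have e2 : ((X :\: S1) :|: [set e]) :\: (X :\: S1) = [set e].
  apply/setP => x; move: (introT implyP (sS x)) (p1 x).
  by rewrite /one_of3 !inE; case_mem_eq.
have h3 : sh ((([set e] :|: S1) :\: [set e]) :|: (X :\: S1)).
  by rewrite e1; case/vtxP: hv => _ _ _ _ /and3P[].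
case: (move21 v2 s3 n4 h3) => r3 _; rewrite e1 e2 in r3.
exact: reach_cyc_r (reach_trans (reach_trans r1 r2) r3) (cyc1 _ _ _).
Qed.

(* The flippable vertex: S1 + {e} is short and becomes long when z is added;
   then ({e}, S1 + z, rest) is a vertex which [flip] mirrors. *)
Lemma flip_vertex e S1 z : e \notin S1 -> e != z -> z \notin S1 -> S1 != set0 ->
  sh ([set e] :|: S1) -> sh ([set e] :|: [set z]) -> L z <= L e ->
  ~~ sh ([set e] :|: (z |: S1)) ->
  exists X Y, vtx [set e] X Y /\ reach 3 (v3 [set e] X Y) (v3 [set e] Y X).
Proof.
move=> eS ez zS nS1 shS shz Lz nsh.
pose X := S1 :|: [set z]; pose Y := ~: ([set e] :|: X).
have eX : e \notin X by rewrite !inE negb_or ez eS.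
have shX : sh X.
  rewrite shortE setlenU; last first.
    by move=> x hx; rewrite inE => /eqP ex; subst x; move: hx; rewrite (negbTE zS).
  move: shS; rewrite shortE setlenU ?setlen1; first lra.
  by move=> x; rewrite inE => /eqP ->; rewrite (negbTE eS).
have shY : sh Y.
  rewrite shortC; move: nsh.
  suff -> : [set e] :|: (z |: S1) = [set e] :|: X by [].
  by apply/setP => x; rewrite !inE; case_mem_eq.
have nY : Y != set0.
  apply/negP => /eqP h0.
  have eqX : X = ~: [set e].
    apply/setP => x; move/setP: h0 => /(_ x); move: eX; rewrite !inE.
    by case E: (x == e); [move/eqP: E => ->|]; case_mem_eq.
  by move: shX; rewrite eqX shortC short1.
have hv : vtx [set e] X Y.
  apply/vtxP; split.
  - by apply/set0Pn; exists e; rewrite inE.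
  - by apply/set0Pn; exists z; rewrite !inE eqxx orbT.
  - exact: nY.
  - move=> x; move: eX; rewrite /one_of3 !inE.
    by case E: (x == e); [move/eqP: E => ->|]; case_mem_eq.
  - by rewrite short1 shX shY.
exists X, Y; split => //; apply: (flip (S1 := S1)) => //.
- by move=> x hx; rewrite inE hx.
- by apply/set0Pn; exists z; rewrite !inE eqxx zS orbT.
- suff -> : X :\: S1 = [set z] by [].
  apply/setP => x; rewrite !inE.
  by case E: (x == z); [move/eqP: E => ->; rewrite zS|]; case_mem_eq.
Qed.

Lemma hub_flip e U : e \notin U -> ~~ sh ([set e] :|: U) ->
  (forall x, x \in U -> sh ([set e] :|: [set x]) /\ L x <= L e) ->
  exists X Y, vtx [set e] X Y /\ reach 3 (v3 [set e] X Y) (v3 [set e] Y X).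
Proof.
move=> eU lU hU.
pose F S := (S \subset U) && sh ([set e] :|: S).
have F0 : F set0 by rewrite /F sub0set setU0 short1.
case: (arg_maxnP (fun S => #|S|) F0) => S1 /andP[sSU shS] maxS.
have /subsetPn [z zU zS] : ~~ (U \subset S1).
  apply/negP => h; have eSU : S1 = U by apply/eqP; rewrite eqEsubset sSU h.
  by move: shS lU; rewrite eSU => ->.
have [shz Lz] := hU z zU.
have eS : e \notin S1 by apply/negP => /(subsetP sSU); rewrite (negbTE eU).
have ez : e != z by apply/negP => /eqP ez; move: eU; rewrite ez zU.
have nS1 : S1 != set0.
  apply/negP => /eqP h0; have Fz : F [set z] by rewrite /F shz andbT sub1set.
  by move: (maxS _ Fz); rewrite h0 cards1 cards0.
apply: (flip_vertex eS ez zS nS1 shS shz Lz); apply/negP => shzS.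
have Fz : F (z |: S1).
  rewrite /F shzS andbT; apply/subsetP => x; rewrite !inE.
  by case/orP => [/eqP ->|/(subsetP sSU)].
by move: (maxS _ Fz); rewrite cardsU1 zS /geq /= ltnn.
Qed.

Lemma hub_diameter e :
  (forall u, is_vertex L u ->
     exists Q W, reach 2 u (v3 [set e] Q W) /\ vtx [set e] Q W) ->
  (exists X Y, vtx [set e] X Y /\ reach 3 (v3 [set e] X Y) (v3 [set e] Y X)) ->
  forall u v, is_vertex L u -> is_vertex L v -> reach 12 u v.
Proof.
move=> normal [X [Y [hG hf]]] u v hu hv.
have to_hub w : is_vertex L w ->
    reach 4 w (v3 [set e] X Y) \/ reach 5 w (v3 [set e] Y X).
  case/normal => Q [W [r1 v1]].
  by case: (normal_pair v1 hG) => r2; [left | right]; apply: reach_trans r1 r2.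
case: (to_hub u hu) => ru; case: (to_hub v hv) => rv.
- exact: reach_mono (reach_trans ru (reach_sym rv)) _.
- exact: reach_mono (reach_trans (reach_trans ru hf) (reach_sym rv)) _.
- exact: reach_mono (reach_trans (reach_trans ru (reach_sym hf)) (reach_sym rv)) _.
- exact: reach_mono (reach_trans ru (reach_sym rv)) _.
Qed.

Lemma inc_split A B C S : vtx A B C -> (forall x, x \in S -> x \in A) ->
  S != set0 -> A :\: S != set0 -> incident L [:: S; A :\: S; B; C] (v3 A B C).
Proof.
move=> hv sS n1 n2; case: (edge_of hv sS n1 n2) => he _; split => //.
exists [:: S :|: (A :\: S); B; C]; first by rewrite /merges inE eqxx.
have -> : S :|: (A :\: S) = A.
  by apply/setP => x; move: (introT implyP (sS x)); rewrite !inE; case_mem.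
by split; [exact: vtx_adm | exact: cyc_refl].
Qed.

Lemma adj_self_big A B C : vtx A B C -> (2 <= #|A|)%N ->
  adjacent L (v3 A B C) (v3 A B C).
Proof.
move=> hv hA; have /card_gt0P [x xA] : (0 < #|A|)%N by apply: leq_trans hA.
have sS y : y \in [set x] -> y \in A by rewrite inE => /eqP ->.
have n1 : [set x] != set0 by apply/set0Pn; exists x; rewrite inE.
have n2 : A :\: [set x] != set0.
  by rewrite -cards_eq0; move: hA; rewrite (cardsD1 x A) xA; case: #|A :\ x|.
by exists [:: [set x]; A :\: [set x]; B; C]; split; apply: inc_split.
Qed.

(* Every vertex carries a loop: with n >= 4 some part has two elements. *)
Lemma adj_self u : (4 <= n)%N -> is_vertex L u -> adjacent L u u.
Proof.
move=> hn /vtx_of [A [B [C [-> hv]]]].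
case/vtxP: (hv) => _ _ _ p _.
have hc : (n <= #|A| + (#|B| + #|C|))%N.
  have eT : [set: 'I_n] = A :|: (B :|: C).
    by apply/setP => x; move: (p x); rewrite /one_of3 !inE; case_mem.
  have h0 : #|A :|: (B :|: C)| = n by rewrite -eT cardsT card_ord.
  case: (leq_card_setU A (B :|: C)) => h1 _; case: (leq_card_setU B C) => h2 _.
  lia.
case: (leqP 2 #|A|) => hA; first exact: adj_self_big.
case: (leqP 2 #|B|) => hB.
  apply: (adj_cyc_l (u := v3 B C A)); last exact/cyc_sym/cyc1.
  exact: adj_cyc_r (adj_self_big (vtx_rot hv) hB) (cyc_sym (cyc1 _ _ _)).
case: (leqP 2 #|C|) => hC; last by lia.
apply: (adj_cyc_l (u := v3 C A B)); last exact/cyc_sym/cyc2.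
exact: adj_cyc_r (adj_self_big (vtx_rot2 hv) hC) (cyc_sym (cyc2 _ _ _)).
Qed.

Lemma walk_mono k k' u v : walk_le L k u v -> (k <= k')%N -> walk_le L k' u v.
Proof. by case=> p [h1 h2 h3] hk; exists p; split=> //; apply: leq_trans hk. Qed.

Lemma walk_of_reach k k' u v : (4 <= n)%N -> is_vertex L u -> reach k u v ->
  (k <= k')%N -> (1 <= k')%N -> walk_le L k' u v.
Proof.
move=> hn hu h hk hk1; case: (reach_walk h) => [hc|hw]; last exact: walk_mono hw hk.
apply: (walk_mono (k := 1)) => //.
exists [:: v]; split=> //; case=> //= _.
exact: adj_cyc_r (adj_self hn hu) hc.
Qed.

Definition orient (a b : 'I_n) (s : sq) : bool :=
  match s with
  | [:: X; Y; Z] =>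
      [|| (a \in X) && (b \in Y), (a \in Y) && (b \in Z) | (a \in Z) && (b \in X)]
  | _ => false
  end.

Lemma orient_cyc a b s t : size s = 3%N -> cyc_eq s t -> orient a b s = orient a b t.
Proof.
case: s => [|X [|Y [|Z [|W s]]]] // _ [k ->].
case: (rot_norm [:: X; Y; Z] k) => k' hk ->.
by case: k' hk => [|[|[|[|k']]]] // _; rewrite /rot /=; case_mem.
Qed.

Lemma merges_size (e m : sq) : m \in merges e -> size m = 3%N.
Proof.
case: e => [|A [|B [|C [|D [|E s]]]]] //=; rewrite !inE.
by case/or4P => /eqP ->.
Qed.

Definition separated (a b c : 'I_n) :=
  forall X, sh X -> [&& ~~ ((a \in X) && (b \in X)), ~~ ((a \in X) && (c \in X))
                      & ~~ ((b \in X) && (c \in X))].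

Section Separated.
Variables (a b c : 'I_n).
Hypothesis sep : separated a b c.

(* The two admissible merges of an edge have the same orientation: a, b, c
   lie in different parts of both, and merging preserves their cyclic order. *)
Lemma orient_edge A B C D m1 m2 : is_edge L [:: A; B; C; D] ->
  m1 \in merges [:: A; B; C; D] -> m2 \in merges [:: A; B; C; D] ->
  admissible L m1 -> admissible L m2 -> orient a b m1 = orient a b m2.
Proof.
move=> /edgeP [_ _ _ _ [p _]].
have shs P1 P2 P3 : admissible L [:: P1; P2; P3] -> [/\ sh P1, sh P2 & sh P3].
  by move=> /andP[_] /=; rewrite andbT => /and3P[].
move: (p a) (p b) (p c) => pa pb pc.
rewrite /merges !inE => h1 h2.
case/or4P: h1 => /eqP -> /shs [/sep s1 /sep s2 /sep s3];
case/or4P: h2 => /eqP -> /shs [/sep t1 /sep t2 /sep t3];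
move: pa pb pc s1 s2 s3 t1 t2 t3; rewrite /one_of4 /orient !inE; case_mem.
Qed.

Lemma orient_adj u v : adjacent L u v -> orient a b u = orient a b v.
Proof.
move=> [e [[he [m1 hm1 [ha1 hc1]]] [_ [m2 hm2 [ha2 hc2]]]]].
have hs := hm1; move: he hm1 hm2.
case: e hs => [|A [|B [|C [|D [|E s]]]]] hs he hm1 hm2;
  try by move: hs; rewrite /merges /= in_nil.
rewrite -(orient_cyc a b (merges_size hm1) hc1) -(orient_cyc a b (merges_size hm2) hc2).
exact: orient_edge he hm1 hm2 ha1 ha2.
Qed.

Lemma orient_walk k u v : walk_le L k u v -> orient a b u = orient a b v.
Proof.
move=> [p [_ hl hn]].
have H i : (i <= size p)%N -> orient a b (nth u (u :: p) i) = orient a b u.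
  elim: i => [|i IH] //= hi.
  by rewrite -(IH (ltnW hi)); symmetry; apply/orient_adj/hn.
move: (H (size p) (leqnn _)).
have -> : nth u (u :: p) (size p) = last u p by apply: (nth_last u (u :: p)).
by rewrite hl => ->.
Qed.

Lemma short_of_compl_ab X : a \in ~: X -> b \in ~: X -> sh X.
Proof.
move=> h1 h2; rewrite -(setCK X) shortC; apply/negP => /sep.
by rewrite h1 h2.
Qed.

Hypothesis ab : a != b.

Definition canon_pos : sq := v3 [set a] [set b] (~: ([set a] :|: [set b])).
Definition canon_neg : sq := v3 [set a] (~: ([set a] :|: [set b])) [set b].

(* With a in P and b in Q: move P \ {a} to W, then Q \ {b} to W. *)
Lemma disc_normal_pos P Q W : vtx P Q W -> a \in P -> b \in Q ->
  reach 2 (v3 P Q W) canon_pos.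
Proof.
rewrite /canon_pos.
move=> hv aP bQ; case/vtxP: (hv) => _ _ _ p _.
have bP : b \notin P by move: (p b); rewrite /one_of3 bQ; case_mem.
have sA x : x \in P :\ a -> x \in P by rewrite !inE => /andP[].
have n1 : P :\: (P :\ a) != set0 by apply/set0Pn; exists a; rewrite !inE eqxx aP.
have sh1 : sh (W :|: (P :\ a)).
  apply: short_of_compl_ab; rewrite !inE ?eqxx ?aP ?andbT ?orbF //=.
  - by move: (p a); rewrite /one_of3 aP; case_mem_eq.
  - by move: (p b); rewrite /one_of3 bQ (negbTE bP); case_mem_eq.
case: (move13 hv sA n1 sh1) => r1 v1.
have sB x : x \in Q :\ b -> x \in Q by rewrite !inE => /andP[].
have n2 : Q :\: (Q :\ b) != set0 by apply/set0Pn; exists b; rewrite !inE eqxx bQ.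
have sh2 : sh ((W :|: (P :\ a)) :|: (Q :\ b)).
  apply: short_of_compl_ab; rewrite !inE ?eqxx ?aP ?bQ ?andbT ?orbF //=.
  - by move: (p a); rewrite /one_of3 aP; case_mem_eq.
  - by rewrite eq_sym ab /=; move: (p b); rewrite /one_of3 bQ (negbTE bP); case_mem_eq.
case: (move23 v1 sB n2 sh2) => r2 _.
have ea : P :\: (P :\ a) = [set a].
  apply/setP => x; rewrite !inE.
  by case: eqP => [->|_] /=; [rewrite aP | case: (x \in P)].
have eb : Q :\: (Q :\ b) = [set b].
  apply/setP => x; rewrite !inE.
  by case: eqP => [->|_] /=; [rewrite bQ | case: (x \in Q)].
have er : (W :|: (P :\ a)) :|: (Q :\ b) = ~: ([set a] :|: [set b]).
  apply/setP => x; rewrite !inE.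
  case E: (x == a); first by move/eqP: E => ->; move: (p a); rewrite /one_of3 aP; case_mem_eq.
  case E': (x == b); first by move/eqP: E' => ->; move: (p b); rewrite /one_of3 bQ; case_mem_eq.
  by move: (p x); rewrite /one_of3; case_mem_eq.
by move: (reach_trans r1 r2); rewrite ea eb er.
Qed.

(* With a in P and b in W: move P \ {a} to Q, then W \ {b} to Q. *)
Lemma disc_normal_neg P Q W : vtx P Q W -> a \in P -> b \in W ->
  reach 2 (v3 P Q W) canon_neg.
Proof.
rewrite /canon_neg.
move=> hv aP bW; case/vtxP: (hv) => _ _ _ p _.
have bP : b \notin P by move: (p b); rewrite /one_of3 bW; case_mem.
have bQ : b \notin Q by move: (p b); rewrite /one_of3 bW; case_mem.
have sA x : x \in P :\ a -> x \in P by rewrite !inE => /andP[].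
have n1 : P :\: (P :\ a) != set0 by apply/set0Pn; exists a; rewrite !inE eqxx aP.
have sh1 : sh (Q :|: (P :\ a)).
  apply: short_of_compl_ab; rewrite !inE ?eqxx ?aP ?andbT ?orbF //=.
  - by move: (p a); rewrite /one_of3 aP; case_mem_eq.
  - by rewrite (negbTE bQ) (negbTE bP) andbF.
case: (move12 hv sA n1 sh1) => r1 v1.
have sB x : x \in W :\ b -> x \in W by rewrite !inE => /andP[].
have n2 : W :\: (W :\ b) != set0 by apply/set0Pn; exists b; rewrite !inE eqxx bW.
have sh2 : sh ((Q :|: (P :\ a)) :|: (W :\ b)).
  apply: short_of_compl_ab; rewrite !inE ?eqxx ?aP ?andbT ?orbF //=.
  - by move: (p a); rewrite /one_of3 aP; case_mem_eq.
  - by rewrite eq_sym ab (negbTE bQ) (negbTE bP).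
case: (move32 v1 sB n2 sh2) => r2 _.
have ea : P :\: (P :\ a) = [set a].
  apply/setP => x; rewrite !inE.
  by case: eqP => [->|_] /=; [rewrite aP | case: (x \in P)].
have eb : W :\: (W :\ b) = [set b].
  apply/setP => x; rewrite !inE.
  by case: eqP => [->|_] /=; [rewrite bW | case: (x \in W)].
have er : (Q :|: (P :\ a)) :|: (W :\ b) = ~: ([set a] :|: [set b]).
  apply/setP => x; rewrite !inE.
  case E: (x == a); first by move/eqP: E => ->; move: (p a); rewrite /one_of3 aP; case_mem_eq.
  case E': (x == b); first by move/eqP: E' => ->; move: (p b); rewrite /one_of3 bW; case_mem_eq.
  by move: (p x); rewrite /one_of3; case_mem_eq.
by move: (reach_trans r1 r2); rewrite ea eb er.
Qed.

Lemma disc_normal u : is_vertex L u ->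
  reach 2 u (if orient a b u then canon_pos else canon_neg).
Proof.
move=> hu; case: (rot_to a hu) => P [Q [W [hc aP hv]]].
have [A [B [C [eu _]]]] := vtx_of hu.
rewrite (orient_cyc a b _ hc); last by rewrite eu.
apply: (reach_cyc_l (cyc_sym hc)).
case/vtxP: (hv) => _ _ _ p /and3P[sP _ _].
have bP : b \notin P by apply/negP => bP; move: (sep sP); rewrite aP bP.
case bQ: (b \in Q).
  have -> : orient a b (v3 P Q W) by rewrite /= aP bQ.
  exact: disc_normal_pos.
have bW : b \in W by move: (p b); rewrite /one_of3 bQ (negbTE bP); case_mem.
have -> : orient a b (v3 P Q W) = false.
  by rewrite /= bQ (negbTE bP); move: (p a); rewrite /one_of3 aP; case_mem_eq.
exact: disc_normal_neg.
Qed.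

End Separated.

Section LongestThree.
Variables (a b c : 'I_n).
Hypotheses (ab : a != b) (ac : a != c) (bc : b != c).
Hypotheses (hba : L b <= L a) (hcb : L c <= L b).
Hypothesis hrest : forall i, i \notin [set a; b; c] -> L i <= L c.

Lemma le_c x : x != a -> x != b -> L x <= L c.
Proof.
move=> xa xb; case: (eqVneq x c) => [->|xc] //.
by apply: hrest; rewrite !inE (negbTE xa) (negbTE xb) (negbTE xc).
Qed.

Lemma le_b x : x != a -> L x <= L b.
Proof.
move=> xa; case: (eqVneq x b) => [->|xb] //.
exact: le_trans (le_c xa xb) hcb.
Qed.

Lemma le_a x : L x <= L a.
Proof.
case: (eqVneq x a) => [->|xa] //.
exact: le_trans (le_b xa) hba.
Qed.

(* If {a, b} is short, a is a hub: a is the longest element of its part and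
   forms a short pair with every other index. *)
Lemma connected_hub_a : sh ([set a] :|: [set b]) ->
  forall u v, is_vertex L u -> is_vertex L v -> reach 12 u v.
Proof.
rewrite shortE setlen2 // => hab.
apply: (hub_diameter (e := a)).
  move=> w hw; case: (rot_to a hw) => P [Q [W [hc aP hvP]]].
  case: (reduce_to_hub hvP aP (fun z _ => le_a z)) => Q' [W' [r hv']].
  by exists Q', W'; split=> //; apply: reach_cyc_l (cyc_sym hc) r.
apply: (hub_flip (U := ~: [set a])).
- by rewrite !inE eqxx.
- by rewrite setUCr shortE setlenT; move: (totlen_gt0 a); lra.
move=> x; rewrite !inE => xa; split; last exact: le_a.
rewrite shortE setlen2 1?eq_sym //; move: (le_b xa); lra.
Qed.

(* If {a, b} is long but l_b + l_c < |L|/2, then b is a hub: a never shares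
   a part with b, and b forms a short pair with every index other than a. *)
Lemma connected_hub_b : ~~ sh ([set a] :|: [set b]) -> L b + L c < T / 2%:R ->
  forall u v, is_vertex L u -> is_vertex L v -> reach 12 u v.
Proof.
move=> /not_short; rewrite setlen2 // => hab hconn.
apply: (hub_diameter (e := b)).
  move=> w hw; case: (rot_to b hw) => P [Q [W [hc bP hvP]]].
  have aP : a \notin P.
    apply/negP => aP; case/vtxP: hvP => _ _ _ _ /and3P[sP _ _].
    by move: (pair_long ab aP bP hab); rewrite sP.
  have mx z : z \in P -> L z <= L b.
    by move=> zP; apply: le_b; apply: contraNneq aP => <-.
  case: (reduce_to_hub hvP bP mx) => Q' [W' [r hv']].
  by exists Q', W'; split=> //; apply: reach_cyc_l (cyc_sym hc) r.
apply: (hub_flip (U := ~: ([set a] :|: [set b]))).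
- by rewrite !inE eqxx orbT.
- have -> : [set b] :|: ~: ([set a] :|: [set b]) = ~: [set a].
    apply/setP => x; rewrite !inE.
    by case E: (x == b); [move/eqP: E => ->; rewrite eq_sym (negbTE ab) | case: (x == a)].
  by rewrite shortC short1.
move=> x; rewrite !inE negb_or => /andP[xa xb]; split; last exact: le_b.
rewrite shortE setlen2 1?eq_sym //; move: (le_c xa xb); lra.
Qed.

Lemma connected_reach : L b + L c < T / 2%:R ->
  forall u v, is_vertex L u -> is_vertex L v -> reach 12 u v.
Proof.
move=> hconn; case hab: (sh ([set a] :|: [set b])).
  exact: connected_hub_a.
by apply: connected_hub_b; rewrite ?hab.
Qed.

Lemma separated_of_disconnected : T / 2%:R < L b + L c -> separated a b c.
Proof.
move=> hdisc X hX; apply/and3P; split; apply/negP => /andP[h1 h2];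
  (suff : ~~ sh X by rewrite hX).
all: apply: pair_long h1 h2 _ => //; move: hba hcb; lra.
Qed.

End LongestThree.

End Polygon.

Theorem mainTheorem9 (R : realFieldType) (n : nat) (L : 'I_n -> R)
    (a b c : 'I_n) :
  (4 <= n)%N ->
  (forall i, 0 < L i) ->
  (forall i, L i < \sum_(j < n | j != i) L j) ->
  (forall J : {set 'I_n}, setlen L J != setlen L (~: J)) ->
  a != b -> a != c -> b != c ->
  L b <= L a -> L c <= L b ->
  (forall i, i \notin [set a; b; c] -> L i <= L c) ->
  (L b + L c < totlen L / 2%:R ->
     forall u v, is_vertex L u -> is_vertex L v -> walk_le L 13 u v) /\
  (totlen L / 2%:R < L b + L c ->
     forall u v, is_vertex L u -> is_vertex L v ->
       (exists k, walk_le L k u v) -> walk_le L 7 u v).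
Proof.
move=> hn hpos htri hgen ab ac bc hba hcb hrest; split.
  move=> hconn u v hu hv.
  have r := connected_reach hpos htri hgen ab hba hcb hrest hconn hu hv.
  exact: (walk_of_reach hpos hn hu r).
move=> hdisc u v hu hv [k hw].
have sep := separated_of_disconnected hpos ab ac bc hba hcb hdisc.
have ru := disc_normal hpos hgen sep ab hu.
have rv := disc_normal hpos hgen sep ab hv.
rewrite -(orient_walk sep hw) in rv.
exact: (walk_of_reach hpos hn hu (reach_trans ru (reach_sym rv))).
Qed.
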